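(* Let $R\subseteq\mathbb{Q}_{>0}\setminus\{1\}$ be non-empty. If $\omega(G(R))=\infty$ (i.e. $G(R)$ contains cliques of every finite size), then $R$ is a set of (measurable) multiplicative recurrence.
   Context: $G(R)$ is the graph with vertex set $\mathbb{N}=\{1,2,\dots\}$ and edge set $\{\{m,n\}: m/n\in R\}$; $\omega$ denotes the clique number. A set $R\subseteq \mathbb{Q}_{>0}\setminus\{1\}$ is a set of (measurable) multiplicative recurrence if for every measure-preserving action $T=(T_n)_{n\in\mathbb{N}}$ of the semigroup $(\mathbb{N},\times)$ on a probability space $(X,\mathcal{B},\mu)$ (each $T_n$ measure-preserving, $T_{mn}=T_m\circ T_n$) and every $B\in\mathcal{B}$ with $\mu(B)>0$, there exist $m,n\in\mathbb{N}$ with $m/n\in R$ and $\mu(T_m^{-1}B\cap T_n^{-1}B)>0$. *)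

From HB Require Import structures.
From mathcomp Require Import all_boot all_order all_algebra.
From mathcomp Require Import all_classical all_reals all_analysis.
Set Implicit Arguments. Unset Strict Implicit. Unset Printing Implicit Defensive.
Import Order.TTheory GRing.Theory Num.Theory.
Local Open Scope classical_set_scope.
Local Open Scope ring_scope.

Definition adjG (S : set rat) (m n : nat) : Prop :=
  m <> n /\ (S (m%:Q / n%:Q) \/ S (n%:Q / m%:Q)).

Definition has_clique (S : set rat) (k : nat) : Prop :=
  exists s : seq nat, [/\ size s = k, uniq s, all (fun n => 0 < n)%N s &
    forall m n, m \in s -> n \in s -> m <> n -> adjG S m n].

Definition clique_number_infinite (S : set rat) : Prop :=
  forall k : nat, has_clique S k.

(* A measure-preserving action of the semigroup (N_{>0}, x) on a probability
   space (X, P): maps T n (n >= 1) that are measurable, measure preserving and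
   satisfy T (m n) = T m \o T n.  (Values of T at 0 are irrelevant.) *)
Definition mp_mult_action (Rr : realType) (d : measure_display)
    (X : measurableType d) (P : probability X Rr) (T : nat -> X -> X) : Prop :=
  [/\ (forall n, (0 < n)%N -> measurable_fun setT (T n)),
      (forall n A, (0 < n)%N -> measurable A -> P (T n @^-1` A) = P A) &
      (forall m n, (0 < m)%N -> (0 < n)%N -> T (m * n)%N = T m \o T n)].

Definition mult_recurrence (Rr : realType) (S : set rat) : Prop :=
  forall (d : measure_display) (X : measurableType d) (P : probability X Rr)
         (T : nat -> X -> X),
    mp_mult_action P T ->
    forall B : set X, measurable B -> (0 < P B)%E ->
      exists m n : nat, [/\ (0 < m)%N, (0 < n)%N, S (m%:Q / n%:Q) &
        (0 < P (T m @^-1` B `&` T n @^-1` B))%E].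

(* If R were not a set of recurrence, some set B of positive measure would have
   P(T_m^-1 B ∩ T_n^-1 B) = 0 whenever m/n ∈ R.  Along a clique of G(R) of size
   k the k sets T_n^-1 B, each of measure P(B), would then be almost disjoint,
   so their union would have measure k P(B), which exceeds 1 once k > 1/P(B). *)
From HB Require Import structures.
From mathcomp Require Import all_boot all_order all_algebra.
From mathcomp Require Import all_classical all_reals all_analysis.
Local Open Scope classical_set_scope.
Local Open Scope ring_scope.
Import Order.TTheory GRing.Theory Num.Theory.

Set Implicit Arguments.
Unset Strict Implicit.

Section pairwise_null_union.
Local Open Scope ereal_scope.
Context d (T : measurableType d) (R : realType) (mu : {measure set T -> \bar R}).
Context (I : eqType) (F : I -> set T).

Lemma bigsetU_seq_measurable (s : seq I) :
  {in s, forall i, measurable (F i)} -> measurable (\big[setU/set0]_(i <- s) F i).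
Proof. by move=> mF; rewrite big_seq; exact: bigsetU_measurable. Qed.

Lemma measure_setI_bigsetU0 (C : set T) (s : seq I) :
  measurable C -> {in s, forall i, measurable (F i)} ->
  {in s, forall i, mu (C `&` F i) = 0} ->
  mu (C `&` \big[setU/set0]_(i <- s) F i) = 0.
Proof.
move=> mC; elim: s => [|x s IH] mF null; first by rewrite big_nil setI0 measure0.
have mFs : {in s, forall i, measurable (F i)}.
  by move=> i si; apply: mF; rewrite in_cons si orbT.
rewrite big_cons setIUr null_set_setU ?null ?mem_head ?IH //.
- by apply: measurableI => //; apply: mF; rewrite mem_head.
- exact: measurableI mC (bigsetU_seq_measurable mFs).
- by move=> i si; apply: null; rewrite in_cons si orbT.
Qed.

Lemma measure_bigsetU_pairwise_null (s : seq I) :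
  uniq s -> {in s, forall i, measurable (F i)} ->
  {in s &, forall i j, i != j -> mu (F i `&` F j) = 0} ->
  mu (\big[setU/set0]_(i <- s) F i) = \sum_(i <- s) mu (F i).
Proof.
elim: s => [|x s IH] /=; first by rewrite !big_nil measure0.
move=> /andP[xNs uniq_s] mF null.
have mFs : {in s, forall i, measurable (F i)}.
  by move=> i si; apply: mF; rewrite in_cons si orbT.
have mFx : measurable (F x) by apply: mF; rewrite mem_head.
set U := \big[setU/set0]_(i <- s) F i.
have mU : measurable U by exact: bigsetU_seq_measurable.
have U_Fx0 : mu (U `&` F x) = 0.
  rewrite setIC measure_setI_bigsetU0 // => i si.
  by apply: null; rewrite ?mem_head ?in_cons ?si ?orbT //; apply: contraNneq xNs => ->.
have muU : mu (U `\` F x) = mu U.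
  by rewrite [RHS](measureDI mu mU mFx); move: U_Fx0 => /= ->; rewrite adde0.
rewrite big_cons -/U -[F x `|` U]setD0 -(setDv (F x)) -setUDr.
rewrite measureU ?setDIK //=; last exact: measurableD.
by rewrite muU big_cons IH // => i j si sj; apply: null; rewrite in_cons ?si ?sj orbT.
Qed.

End pairwise_null_union.

Lemma exists_natmul_gt1 (R : archiRealFieldType) (b : R) : 0 < b -> exists k, 1 < b *+ k.
Proof.
move=> b0; exists (Num.truncn b^-1).+1.
by rewrite -mulr_natr -(ltr_pdivrMl _ _ b0) mulr1 truncnS_gt.
Qed.

Theorem lemma3p1 (Rr : realType) (S : set rat) :
  (forall q, S q -> 0 < q /\ q != 1) ->
  S !=set0 ->
  clique_number_infinite S ->
  mult_recurrence Rr S.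
Proof.
move=> _ _ cliques d X P T [mT PT _] B mB PB_gt0.
have mTB n : (0 < n)%N -> measurable (T n @^-1` B).
  by move=> n0; rewrite -[_ @^-1` _]setTI; exact: mT.
have [b PBb] : exists b, P B = b%:E by exists (fine (P B)); rewrite fineK ?fin_num_measure.
have [k kb_gt1] : exists k, 1 < b *+ k by apply: exists_natmul_gt1; rewrite -lte_fin -PBb.
have [s [size_s uniq_s /allP s_gt0 clique_s]] := cliques k.
apply: contrapT => no_recurrence.
have null : {in s &, forall m n, m != n -> P (T m @^-1` B `&` T n @^-1` B) = 0%E}.
  move=> m n ms ns /eqP mn; apply/eqP; rewrite -measure_le0 leNgt; apply/negP => pos.
  apply: no_recurrence; have [_ [Smn|Snm]] := clique_s m n ms ns mn.
  - by exists m, n; split; rewrite ?s_gt0.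
  - by exists n, m; split; rewrite ?s_gt0 // setIC.
have mTBs : {in s, forall n, measurable (T n @^-1` B)} by move=> n /s_gt0/mTB.
have := probability_le1 P (bigsetU_seq_measurable mTBs).
rewrite measure_bigsetU_pairwise_null // (eq_big_seq (fun=> b%:E)); last first.
  by move=> n /s_gt0 n0; rewrite -PBb; apply: PT.
have sum_b : (\sum_(n <- s) b%:E)%E = (b *+ k)%:E.
  by rewrite -size_s sumEFin big_const_seq count_predT iter_addr addr0.
by rewrite sum_b lee_fin leNgt kb_gt1.
Qed.
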